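(* Assume (H1), (H2). Let $L\in\mathbb R$ and $\lambda_\infty>\|f'\circ\varphi\|_{L^\infty}$. Then for every $s\in(-\infty,L]$, $\mathbb E^u_-(s,\lambda_\infty)\cap\ell_*^{sand}=\{0\}$; consequently the Maslov index of $s\mapsto\mathbb E^u_-(s,\lambda_\infty)$, $s\in[-\infty,L]$, with respect to $\ell_*^{sand}$ is zero.
   Context: Fix real $\nu,\mu$ and $f(u)=\nu u^2-u^3-\mu u$. (H1): $\varphi$ is a smooth stationary solution of $u_t=-(1+\partial_x^2)^2u+f(u)$ with $\varphi(x)\to0$ as $x\to\pm\infty$. (H2): $f'(0)<0$. $B(x,\lambda)=\begin{pmatrix}0&0&0&1\\0&0&1&-2\\-\lambda-1+f'(\varphi(x))&0&0&0\\0&1&0&0\end{pmatrix}$ is the coefficient matrix of the first-order form of $(-\partial_x^4-2\partial_x^2-1+f'(\varphi))u=\lambda u$ in the variables $q=(u,u_{xx},u_{xxx}+2u_x,u_x)$. $\mathbb E^u_-(x,\lambda)$ is the set of values $q(x)$ of solutions of $q'=B(y,\lambda)q$ with $q(y)\to0$ as $y\to-\infty$; at $x=-\infty$ it is defined as the unstable spectral subspace of $B_\infty(\lambda)=\lim_{x\to\pm\infty}B(x,\lambda)$. $\ell_*^{sand}=\{q\in\mathbb R^4:q_1=q_4=0\}$. The Maslov index is the signed count of crossings of the path with the reference plane. *)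

From HB Require Import structures.
From mathcomp Require Import all_boot all_order all_algebra.
From mathcomp Require Import all_classical all_reals all_analysis.
Set Implicit Arguments. Unset Strict Implicit. Unset Printing Implicit Defensive.
Import Order.TTheory GRing.Theory Num.Theory.
Import numFieldNormedType.Exports.
Local Open Scope classical_set_scope.
Local Open Scope ring_scope.

Section Defs.
Variable R : realType.

Definition fSH (nu mu u : R) : R := nu * u ^+ 2 - u ^+ 3 - mu * u.
Definition dfSH (nu mu u : R) : R := 2 * nu * u - 3 * u ^+ 2 - mu.

(* B with the entry f'(phi(x)) replaced by the number c *)
Definition Bmx (c lam : R) : 'M[R]_4 :=
  \matrix_(i < 4, j < 4)
    match nat_of_ord i, nat_of_ord j with
    | 0%N, 3%N => 1
    | 1%N, 2%N => 1
    | 1%N, 3%N => -2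
    | 2%N, 0%N => - lam - 1 + c
    | 3%N, 1%N => 1
    | _, _ => 0
    end.

Definition B (nu mu : R) (phi : R -> R) (x lam : R) : 'M[R]_4 :=
  Bmx (dfSH nu mu (phi x)) lam.

(* B_infty(lambda) = lim_{x -> +-oo} B(x,lambda), with phi -> 0 *)
Definition Binf (nu mu lam : R) : 'M[R]_4 := Bmx (dfSH nu mu 0) lam.

(* smooth stationary solution of u_t = -(1+d_x^2)^2 u + f(u):
   phi has derivatives of all orders d n (d 0 = phi, (d n)' = d n.+1) and
   -(phi'''' + 2 phi'' + phi) + f(phi) = 0 *)
Definition smooth_stationary (nu mu : R) (phi : R -> R) : Prop :=
  exists d : nat -> R -> R,
    d 0%N = phi /\
    (forall (n : nat) (x : R), is_derive x (1 : R) (d n) (d n.+1 x)) /\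
    (forall x, - (d 4%N x + 2 * d 2%N x + d 0%N x) + fSH nu mu (d 0%N x) = 0).

Definition Eu_minus (nu mu : R) (phi : R -> R) (x lam : R) : set 'cV[R]_4 :=
  [set v | exists q : R -> 'cV[R]_4,
     (forall y : R, is_derive y (1 : R) q (B nu mu phi y lam *m q y)) /\
     (q y @[y --> -oo] --> (0 : 'cV[R]_4)) /\ q x = v].

(* Real unstable spectral subspace of a real 4x4 matrix A: the real part of
   the sum of the generalized eigenspaces for eigenvalues a +- ib with a > 0;
   the (real) generalized eigenspace of the pair a +- ib is
   ker (A^2 - 2a A + (a^2+b^2))^4 (b = 0 covers real eigenvalues). *)
Definition unstable_subspace (A : 'M[R]_4) : set 'cV[R]_4 :=
  [set v | exists s : seq (R * R * 'cV[R]_4),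
     (forall t, t \in s -> 0 < t.1.1 /\
        (A ^+ 2 - (2 * t.1.1) *: A + (t.1.1 ^+ 2 + t.1.2 ^+ 2)%:M) ^+ 4 *m t.2 = 0)
     /\ v = \sum_(t <- s) t.2].

Definition Eu_minus_ext (nu mu : R) (phi : R -> R) (s : \bar R) (lam : R)
  : set 'cV[R]_4 :=
  match s with
  | EFin r => Eu_minus nu mu phi r lam
  | -oo%E => unstable_subspace (Binf nu mu lam)
  | +oo%E => set0
  end.

Definition ell_sand : set 'cV[R]_4 :=
  [set q | q ord0 ord0 = 0 /\ q (inord 3) ord0 = 0].

Definition sup_norm (g : R -> R) : \bar R :=
  ereal_sup [set (`| g x |)%:E | x in setT].

End Defs.

From HB Require Import structures.
From mathcomp Require Import all_boot all_order all_algebra.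
From mathcomp Require Import all_classical all_reals all_analysis.
From mathcomp Require Import ring lra.
Import Order.TTheory GRing.Theory Num.Theory.
Import numFieldNormedType.Exports.
Local Open Scope classical_set_scope.
Local Open Scope ring_scope.
Set Implicit Arguments. Unset Strict Implicit. Unset Printing Implicit Defensive.

(* For s finite, the form E(q) = q2 q4 - q1 q3 + 2 q1 q4 satisfies
   E' = (q1 + q2)^2 + (lam - f'(phi)) q1^2 >= 0 along solutions of q' = B q.
   A solution decaying at -oo has E -> 0 there, and E vanishes on l_sand, so if
   q(s) lies in l_sand then E = 0 on (-oo, s]; hence E' = 0, which forces
   q1 = q2 = 0 and then q3 = q4 = 0 on (-oo, s), and q(s) = 0 by continuity.
   For s = -oo, B_oo(lam) is annihilated by x^4 + 2x^2 + m with m = 1 + lam - f'(0) > 1,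
   which splits as (x^2 - 2 al x + r)(x^2 + 2 al x + r) with al > 0.  The second
   factor is coprime to every (x^2 - 2ax + a^2 + b^2) with a > 0, so the unstable
   subspace lies in the kernel of the first factor, on which q1 = q4 = 0 forces q = 0. *)

Section CoprimeKernels.
Variables (F : fieldType) (n : nat) (A : 'M[F]_n.+1).

Lemma horner_mx_coprime_ker (p q : {poly F}) (w : 'cV_n.+1) : coprimep p q ->
  horner_mx A p *m w = 0 -> horner_mx A q *m w = 0 -> w = 0.
Proof.
case/Bezout_eq1_coprimepP => -[u v] /= uv pw qw.
have -> : w = horner_mx A (u * p + v * q) *m w by rewrite uv rmorph1 mul1mx.
by rewrite rmorphD mulmxDl !rmorphM -!mulmxA pw qw !mulmx0 addr0.
Qed.

Lemma horner_mx_coprime_factor (p q r : {poly F}) (w : 'cV_n.+1) : coprimep p q ->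
  horner_mx A p *m w = 0 -> horner_mx A (q * r) *m w = 0 -> horner_mx A r *m w = 0.
Proof.
move=> pq pw qrw; apply: (horner_mx_coprime_ker pq).
  by rewrite mulmxA mulmxE comm_horner_mx2 -mulmxE -mulmxA pw mulmx0.
by rewrite mulmxA mulmxE -rmorphM.
Qed.

End CoprimeKernels.

Definition quad_poly (R : nzRingType) (a b : R) : {poly R} :=
  'X ^+ 2 - (2 * a)%:P * 'X + (a ^+ 2 + b ^+ 2)%:P.

Lemma horner_mx_quad (R : comNzRingType) n (A : 'M[R]_n.+1) (a b : R) :
  horner_mx A (quad_poly a b) = A ^+ 2 - (2 * a) *: A + (a ^+ 2 + b ^+ 2)%:M.
Proof.
by rewrite rmorphD rmorphB rmorphXn rmorphM /= !horner_mx_C horner_mx_X -mul_scalar_mx.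
Qed.

Lemma coprimep_quad (R : realFieldType) (a b c d : R) : a != c ->
  coprimep (quad_poly a b) (quad_poly c d).
Proof.
move=> ac; apply/Bezout_eq1_coprimepP.
pose d1 := 2 * (c - a); pose d0 := a ^+ 2 + b ^+ 2 - c ^+ 2 - d ^+ 2.
pose u := (- d1)%:P * 'X + (d0 + 2 * c * d1)%:P.
pose v := d1%:P * 'X + (d1 ^+ 2 - 2 * c * d1 - d0)%:P.
(* The resultant: the product of the squared distances between the roots a +- ib and c +- id. *)
pose res := ((a - c) ^+ 2 + (b - d) ^+ 2) * ((a - c) ^+ 2 + (b + d) ^+ 2).
have ac2 : 0 < (a - c) ^+ 2 by rewrite exprn_even_gt0 // subr_eq0.
have res0 : res != 0.
  by rewrite mulf_neq0 // lt0r_neq0 // ltr_pwDl // sqr_ge0.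
have bez : u * quad_poly a b + v * quad_poly c d = res%:P.
  rewrite /u /v /quad_poly /res /d1 /d0; ring.
exists ((res^-1)%:P * u, (res^-1)%:P * v) => /=.
by rewrite -!mulrA -mulrDr bez -polyCM mulVf.
Qed.

Lemma quartic_factor (R : rcfType) (m : R) : 1 < m -> exists al e : R, 0 < al /\
  quad_poly (- al) e * quad_poly al e = 'X ^+ 4 + 2%:P * 'X ^+ 2 + m%:P.
Proof.
(* x^4 + 2x^2 + m = (x^2 + r)^2 - (2 al x)^2 with r = sqrt m = 2 al^2 + 1 = al^2 + e^2. *)
move=> m_gt1; pose r := Num.sqrt m; pose al := Num.sqrt ((r - 1) / 2).
have r2 : r ^+ 2 = m by rewrite sqr_sqrtr // ltW // (lt_trans ltr01).
have r_gt1 : 1 < r by rewrite -sqrtr1 ltr_sqrt // (lt_trans ltr01).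
have al2 : al ^+ 2 = (r - 1) / 2 by rewrite sqr_sqrtr // divr_ge0 // subr_ge0 ltW.
exists al, (Num.sqrt (al ^+ 2 + 1)); split; first by rewrite sqrtr_gt0 divr_gt0 // subr_gt0.
rewrite /quad_poly sqr_sqrtr ?addr_ge0 ?sqr_ge0 // sqrrN -r2.
have -> : r = 2 * al ^+ 2 + 1 by rewrite al2; field.
ring.
Qed.

Lemma mulmx_exprS (R : pzRingType) n p (A : 'M[R]_n.+1) (B : 'M[R]_(n.+1, p)) k :
  A ^+ k.+1 *m B = A *m (A ^+ k *m B).
Proof. by rewrite exprS mulmxA. Qed.

Section RealAnalysis.
Variable R : realType.

Lemma cvg_mx_entry (T : Type) (F : set_system T) {FF : Filter F} m n
    (f : T -> 'M[R]_(m, n)) (M : 'M[R]_(m, n)) i j :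
  f @ F --> M -> (fun x => f x i j) @ F --> M i j.
Proof.
move=> /cvgrPdist_le fM; apply/cvgrPdist_le => e e_gt0.
apply: filterS (fM e e_gt0) => x; apply: le_trans.
rewrite [leRHS]/Num.Def.normr /= mx_normrE.
by apply: le_trans (le_bigmax _ _ (i, j)); rewrite !mxE.
Qed.

Lemma is_derive_near0 (V : normedModType R) (f : R -> V) x (d : V) :
  (\forall y \near x, f y = 0) -> is_derive x 1 f d -> d = 0.
Proof.
move=> f0 fd; have fd0 : is_derive x 1 (cst 0) d := near_eq_is_derive f0 fd.
rewrite -(@derive_val _ _ _ _ _ _ _ fd0).
exact: (@derive_val _ _ _ _ _ _ _ (is_derive_cst 0 x 1)).
Qed.

Lemma continuous_left_cst (T : topologicalType) (f : R -> T) s (a : T) :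
  hausdorff_space T -> {for s, continuous f} -> (forall x, x < s -> f x = a) -> f s = a.
Proof.
move=> hT fs fa; apply: (@cvg_unique T hT (f @ s^'-)).
- exact: cvg_at_left_filter.
- by apply: cvg_near_cst; near=> x; apply: fa; near: x; exact: nbhs_left_lt.
Unshelve. all: end_near.
Qed.

Lemma nondecreasing_cvgNy_ge (f : R -> R) (l : R) :
  {homo f : x y / x <= y} -> f x @[x --> -oo] --> l -> forall x, l <= f x.
Proof.
move=> f_ndecr fl x; apply: (closed_cvg _ (@closed_le _ (f x)) _ _ fl).
by apply: filterS (nbhs_ninfty_le (num_real x)) => y; apply: f_ndecr.
Qed.

End RealAnalysis.

Section Bmx.
Variable R : realType.
Implicit Types (c l : R) (v w : 'cV[R]_4).

(* Entries are numbered from 0: [entry4 w k] is the paper's q_(k+1). *)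
Definition entry4 w (k : nat) : R := w (inord k) ord0.

Arguments entry4 w k%_N.

Lemma entry40 k : entry4 0 k = 0.
Proof. by rewrite /entry4 mxE. Qed.

Lemma entry4D v w k : entry4 (v + w) k = entry4 v k + entry4 w k.
Proof. by rewrite /entry4 mxE. Qed.

Lemma entry4Z (a : R) w k : entry4 (a *: w) k = a * entry4 w k.
Proof. by rewrite /entry4 mxE. Qed.

Lemma entry4N w k : entry4 (- w) k = - entry4 w k.
Proof. by rewrite /entry4 mxE. Qed.

Lemma entry4_eq0 w :
  entry4 w 0 = 0 -> entry4 w 1 = 0 -> entry4 w 2 = 0 -> entry4 w 3 = 0 -> w = 0.
Proof.
move=> w0 w1 w2 w3; apply/matrixP => i j; rewrite (ord1 j) !mxE.
have -> : i = inord i by apply/val_inj; rewrite /= inordK.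
by case: i => -[|[|[|[|//]]]] /=.
Qed.

Lemma ell_sandE w : ell_sand w <-> entry4 w 0 = 0 /\ entry4 w 3 = 0.
Proof.
rewrite /ell_sand /entry4 /=.
by have -> : inord 0 = ord0 :> 'I_4 by apply/val_inj; rewrite /= inordK.
Qed.

Lemma Bmx_mul_entry c l w :
  [/\ entry4 (Bmx c l *m w) 0 = entry4 w 3,
      entry4 (Bmx c l *m w) 1 = entry4 w 2 - 2 * entry4 w 3,
      entry4 (Bmx c l *m w) 2 = (- l - 1 + c) * entry4 w 0 &
      entry4 (Bmx c l *m w) 3 = entry4 w 1].
Proof.
have inordE (k : nat) (i : 'I_4) : k = i -> inord k = i by move=> ->; rewrite inord_val.
rewrite /entry4 (inordE 0%N ord0) // (inordE 1%N (lift ord0 ord0)) //.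
rewrite (inordE 2%N (lift ord0 (lift ord0 ord0))) //.
rewrite (inordE 3%N (lift ord0 (lift ord0 (lift ord0 ord0)))) //.
rewrite !mxE !big_ord_recl !big_ord0 !mxE /=; split; ring.
Qed.

Lemma Bmx_mul_entry0 c l w : entry4 (Bmx c l *m w) 0 = entry4 w 3.
Proof. by case: (Bmx_mul_entry c l w). Qed.
Lemma Bmx_mul_entry1 c l w : entry4 (Bmx c l *m w) 1 = entry4 w 2 - 2 * entry4 w 3.
Proof. by case: (Bmx_mul_entry c l w). Qed.
Lemma Bmx_mul_entry2 c l w : entry4 (Bmx c l *m w) 2 = (- l - 1 + c) * entry4 w 0.
Proof. by case: (Bmx_mul_entry c l w). Qed.
Lemma Bmx_mul_entry3 c l w : entry4 (Bmx c l *m w) 3 = entry4 w 1.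
Proof. by case: (Bmx_mul_entry c l w). Qed.

Definition Bmx_entryE := (Bmx_mul_entry0, Bmx_mul_entry1, Bmx_mul_entry2, Bmx_mul_entry3,
  entry4D, entry4N, entry4Z).

Lemma horner_mx_Bmx_quartic c l w :
  horner_mx (Bmx c l) ('X ^+ 4 + 2%:P * 'X ^+ 2 + (1 + l - c)%:P) *m w = 0.
Proof.
rewrite rmorphD rmorphD rmorphXn rmorphM rmorphXn /= !horner_mx_C horner_mx_X.
have -> : 2%:M * Bmx c l ^+ 2 = 2 *: Bmx c l ^+ 2 by rewrite -mul_scalar_mx.
rewrite !mulmxDl mul_scalar_mx -scalemxAl !mulmx_exprS expr0 mul1mx.
by apply: entry4_eq0; rewrite !Bmx_entryE; ring.
Qed.

Lemma Bmx_quad_ker_ell_sand c l (a b : R) v :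
  horner_mx (Bmx c l) (quad_poly a b) *m v = 0 -> ell_sand v -> v = 0.
Proof.
rewrite horner_mx_quad !mulmxDl mulNmx -scalemxAl mul_scalar_mx mulmx_exprS expr1.
move=> ker /ell_sandE[v0 v3].
have := congr1 (entry4^~ 0) ker; have := congr1 (entry4^~ 3) ker.
rewrite /= !Bmx_entryE v0 v3 !entry40 !mulr0 !subr0 !addr0 => v2 v1.
by move: v2; rewrite v1 mulr0 subr0 => v2; apply: entry4_eq0.
Qed.

Lemma unstable_Bmx_ker c l : c < l -> exists a b, forall v,
  unstable_subspace (Bmx c l) v -> horner_mx (Bmx c l) (quad_poly a b) *m v = 0.
Proof.
move=> lt_cl; have [al [e [al_gt0 fac]]] : exists al e : R, 0 < al /\
    quad_poly (- al) e * quad_poly al e = 'X ^+ 4 + 2%:P * 'X ^+ 2 + (1 + l - c)%:P.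
  by apply: quartic_factor; lra.
exists al, e => _ [s [s_ker ->]]; rewrite mulmx_sumr big1_seq //.
move=> -[[a b] w] /= /s_ker[/= a_gt0 w_ker].
apply: (@horner_mx_coprime_factor _ _ _ (quad_poly a b ^+ 4) (quad_poly (- al) e)).
- by apply/coprimep_expl/coprimep_quad; rewrite gt_eqF // (lt_trans _ a_gt0) // oppr_lt0.
- by rewrite rmorphXn /= horner_mx_quad.
- by rewrite fac horner_mx_Bmx_quartic.
Qed.

Lemma unstable_Bmx_ell_sand c l :
  c < l -> unstable_subspace (Bmx c l) `&` @ell_sand R `<=` [set 0].
Proof. by move=> /unstable_Bmx_ker[a [b ker]] v [/ker]; apply: Bmx_quad_ker_ell_sand. Qed.

End Bmx.


Section DecayingSolution.
Variables (R : realType) (c : R -> R) (lam : R) (q : R -> 'cV[R]_4).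
Implicit Types (x y : R) (k : nat).
Hypothesis q_sol : forall y, is_derive y 1 q (Bmx (c y) lam *m q y).
Hypothesis c_lt_lam : forall y, c y < lam.
Hypothesis q_cvgNy : q y @[y --> -oo] --> (0 : 'cV[R]_4).

Local Notation Q k := (fun y : R => entry4 (q y) k).

Lemma is_derive_entry k y : is_derive y 1 (Q k) (entry4 (Bmx (c y) lam *m q y) k).
Proof.
have [dq <-] := q_sol y; rewrite /entry4 derive_mx // mxE; apply: derivableP.
by move/derivable_mxP: dq; apply.
Qed.

Lemma is_derive_entries y :
  [/\ is_derive y 1 (Q 0) (Q 3 y), is_derive y 1 (Q 1) (Q 2 y - 2 * Q 3 y),
      is_derive y 1 (Q 2) ((- lam - 1 + c y) * Q 0 y) & is_derive y 1 (Q 3) (Q 1 y)].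
Proof.
by split; [move: (is_derive_entry 0 y) | move: (is_derive_entry 1 y)
  | move: (is_derive_entry 2 y) | move: (is_derive_entry 3 y)]; rewrite Bmx_entryE.
Qed.

Definition energy y := Q 1 y * Q 3 y - Q 0 y * Q 2 y + 2 * (Q 0 y * Q 3 y).

Lemma is_derive_energy y :
  is_derive y 1 energy ((Q 0 y + Q 1 y) ^+ 2 + (lam - c y) * Q 0 y ^+ 2).
Proof.
have [d0 d1 d2 d3] := is_derive_entries y.
apply: is_derive_eq; rewrite /GRing.scale /=; ring.
Qed.

Lemma energy_nondecreasing : {homo energy : x y / x <= y}.
Proof.
move=> x y xy; apply: (ger0_derive1_ndecrNy (b := y)) => // [z _ | z _ | ].
- by case: (is_derive_energy z).
- rewrite derive1E (@derive_val _ _ _ _ _ _ _ (is_derive_energy z)).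
  by rewrite addr_ge0 ?sqr_ge0 // mulr_ge0 ?sqr_ge0 // subr_ge0 ltW.
- by apply: derivable_within_continuous => z _; case: (is_derive_energy z).
Qed.

Lemma energy_cvgNy : energy y @[y --> -oo] --> (0 : R).
Proof.
have Q0 k : Q k y @[y --> -oo] --> (0 : R).
  by rewrite -(entry40 R k); apply: cvg_mx_entry.
rewrite (_ : 0 = 0 * 0 - 0 * 0 + 2 * (0 * 0)); last by rewrite !mulr0 subr0 addr0.
by apply: cvgD; [apply: cvgB | apply: cvgM; first exact: cvg_cst]; apply: cvgM.
Qed.

Lemma energy_ge0 x : 0 <= energy x.
Proof. exact: nondecreasing_cvgNy_ge energy_nondecreasing energy_cvgNy x. Qed.

Variable s : R.
Hypothesis qs_ell_sand : ell_sand (q s).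

Lemma energy_eq0_left x : x <= s -> energy x = 0.
Proof.
have /ell_sandE[q0 q3] := qs_ell_sand.
have Es : energy s = 0 by rewrite /energy q0 q3 !(mulr0, mul0r) subr0 addr0.
by move=> xs; apply/eqP; rewrite eq_le energy_ge0 andbT -Es energy_nondecreasing.
Qed.

Lemma entries01_eq0_left x : x < s -> Q 0 x = 0 /\ Q 1 x = 0.
Proof.
move=> xs; have E0 : \forall y \near x, energy y = 0.
  by apply: filterS (lt_nbhsl xs) => y /ltW; apply: energy_eq0_left.
have k_gt0 : 0 < lam - c x by rewrite subr_gt0.
move: k_gt0 (is_derive_near0 E0 (is_derive_energy x)).
set a := Q 0 x; set b := Q 1 x; set k := lam - c x => k_gt0 E'.
have ka : k * a ^+ 2 = 0.
  by have := sqr_ge0 (a + b); have := mulr_ge0 (ltW k_gt0) (sqr_ge0 a); lra.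
have a0 : a = 0.
  by apply/eqP; rewrite -sqrf_eq0; apply/eqP/(mulfI (lt0r_neq0 k_gt0)); rewrite mulr0.
split=> //; apply/eqP; rewrite -sqrf_eq0; apply/eqP.
by move: E'; rewrite ka addr0 a0 add0r.
Qed.

Lemma sol_eq0_left x : x < s -> q x = 0.
Proof.
move=> xs; have [d0 d1 _ _] := is_derive_entries x.
have [q0 q1] := entries01_eq0_left xs.
have near01 : \forall y \near x, Q 0 y = 0 /\ Q 1 y = 0.
  by apply: filterS (lt_nbhsl xs) => y; apply: entries01_eq0_left.
have q3 : Q 3 x = 0 by apply: is_derive_near0 d0; apply: filterS near01 => y [].
have : Q 2 x - 2 * Q 3 x = 0 by apply: is_derive_near0 d1; apply: filterS near01 => y [].
by rewrite q3 mulr0 subr0 => q2; apply: entry4_eq0.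
Qed.

Lemma sol_ell_sand_eq0 : q s = 0.
Proof.
apply: (continuous_left_cst (@norm_hausdorff _ _) _ sol_eq0_left).
by apply/differentiable_continuous/derivable1_diffP; case: (q_sol s).
Qed.

End DecayingSolution.

Lemma sup_norm_lt (R : realType) (g : R -> R) (a : R) :
  (sup_norm g < a%:E)%E -> forall x, `|g x| < a.
Proof.
move=> ga x; rewrite -lte_fin; apply: le_lt_trans ga.
by apply: ereal_sup_ubound; exists x.
Qed.

Lemma Eu_minus_ell_sand (R : realType) (nu mu : R) (phi : R -> R) (r lam : R) :
  (forall x, dfSH nu mu (phi x) < lam) ->
  Eu_minus nu mu phi r lam `&` @ell_sand R `<=` [set 0].
Proof.
move=> c_lt _ [[q [q_sol [q_cvg <-]]] qr_ell].
exact: (sol_ell_sand_eq0 (c := fun x => dfSH nu mu (phi x)) q_sol c_lt q_cvg qr_ell).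
Qed.

Theorem proposition3 (R : realType) (nu mu : R) (phi : R -> R)
  (H1 : smooth_stationary nu mu phi)
  (H1p : phi x @[x --> +oo] --> 0)
  (H1m : phi x @[x --> -oo] --> 0)
  (H2 : dfSH nu mu 0 < 0)
  (L lam_inf : R)
  (Hlam : (sup_norm (fun x => dfSH nu mu (phi x)) < lam_inf%:E)%E) :
  forall s : \bar R, (s <= L%:E)%E ->
    Eu_minus_ext nu mu phi s lam_inf `&` @ell_sand R = [set (0 : 'cV[R]_4)].
Proof.
(* Only the bound f'(phi) < lam_inf is used: neither smoothness nor decay of phi. *)
move=> s s_le_L.
have c_lt x : dfSH nu mu (phi x) < lam_inf.
  exact: le_lt_trans (ler_norm _) (sup_norm_lt Hlam x).
have c0_lt : dfSH nu mu 0 < lam_inf.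
  exact: lt_trans H2 (le_lt_trans (normr_ge0 _) (sup_norm_lt Hlam 0)).
apply/seteqP; split => [v [Ev v_ell] | _ ->] /=.
- case: s s_le_L Ev => [r | | ] //= _ Ev.
    exact: Eu_minus_ell_sand c_lt _ (conj Ev v_ell).
  exact: unstable_Bmx_ell_sand c0_lt _ (conj Ev v_ell).
- split; last by rewrite /ell_sand /= !mxE.
  case: s s_le_L => [r | | ] //= _; last by exists [::]; rewrite big_nil.
  exists (fun=> 0); split; last by split => //; apply: cvg_cst.
  by move=> y; apply: is_derive_eq; rewrite mulmx0.
Qed.
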